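(* There exists $M_1>\sqrt{2(n-1)}$ with the following property. Let $f$ be a solution of $\frac{f''}{1+(f')^2}=\left(\frac r2-\frac{n-1}{r}\right)f'-\frac f2$ with $f(\sqrt{2(n-1)})>0$, and suppose $f'(r)\le 0$ for all $r\ge\sqrt{2(n-1)}$ in its domain. Then $f(r)<0$ whenever $r>M_1$ and $f(r)$ is defined.
   Context: $n\ge2$ is a fixed integer; $f$ is a real function of $r>0$ defined on an interval containing $\sqrt{2(n-1)}$ (curves $(f(r),r)$ with this equation are the profile geodesics written as graphs over the $r$-axis). *)

From Stdlib Require Import Reals.
From Coquelicot Require Import Coquelicot.
Open Scope R_scope.

Definition profile_eq (n : nat) (f df d2f : R -> R) (r : R) : Prop :=
  d2f r / (1 + (df r)^2) = (r / 2 - (INR n - 1) / r) * df r - f r / 2.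

Definition is_profile_solution (n : nat) (a : R) (b : Rbar)
    (f df d2f : R -> R) : Prop :=
  forall r, a < r -> Rbar_lt (Finite r) b ->
    is_derive f r (df r) /\ is_derive df r (d2f r) /\ profile_eq n f df d2f r.

(** Sturm comparison with [g'' + g/4 = 0], whose solution [sin ((t - x)/2)] is
    positive inside and vanishes at both ends of [[x, x + 2 PI]].  As long as
    [f >= 0] and [f' <= 0] beyond [sqrt (2 (n - 1))], the drift coefficient
    [r/2 - (n - 1)/r] is nonnegative, so the profile equation forces
    [f'' <= - f/2 <= - f/4]; on such an interval this is incompatible with
    [f > 0] at its left end. *)

From Stdlib Require Import Reals Lra Lia.
From Coquelicot Require Import Coquelicot.
Open Scope R_scope.

Lemma nonpos_derive_antitone (g dg : R -> R) (x y : R) :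
  x <= y ->
  (forall t, x <= t <= y -> is_derive g t (dg t)) ->
  (forall t, x <= t <= y -> dg t <= 0) ->
  g y <= g x.
Proof.
  intros Hxy Hd Hneg.
  destruct (MVT_gen g x y dg) as [c [Hc He]].
  - rewrite Rmin_left, Rmax_right by lra.
    intros t Ht; apply Hd; lra.
  - rewrite Rmin_left, Rmax_right by lra.
    intros t Ht; apply continuity_pt_filterlim, (ex_derive_continuous g).
    exists (dg t); apply Hd; lra.
  - rewrite Rmin_left, Rmax_right in Hc by lra.
    assert (dg c <= 0) by (apply Hneg; lra).
    nra.
Qed.

Section Sturm.

Variables (g dg d2g : R -> R) (x : R).

(* The Wronskian [g' phi - g phi'] with [phi t = sin ((t - x)/2)]. *)
Definition sturm_wronskian (t : R) : R :=
  dg t * sin ((t - x) / 2) - g t / 2 * cos ((t - x) / 2).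

Lemma is_derive_sturm_wronskian (t : R) :
  is_derive g t (dg t) -> is_derive dg t (d2g t) ->
  is_derive sturm_wronskian t ((d2g t + g t / 4) * sin ((t - x) / 2)).
Proof.
  intros Hg Hdg; unfold sturm_wronskian.
  evar (d : R); replace ((d2g t + g t / 4) * sin ((t - x) / 2)) with d.
  - apply (@is_derive_minus R_AbsRing R_NormedModule).
    + apply (is_derive_mult dg); [exact Hdg | | intros; apply Rmult_comm].
      now auto_derive.
    + apply (is_derive_mult (fun t => g t / 2)); [| | intros; apply Rmult_comm].
      * apply (is_derive_mult g (fun _ => / 2)); [exact Hg | | intros; apply Rmult_comm].
        apply (@is_derive_const R_AbsRing R_NormedModule).
      * now auto_derive.
  - unfold d, minus, plus, opp, zero, mult; simpl; unfold Rminus, Rdiv; field.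
Qed.

Lemma sturm_half_period :
  (forall t, x <= t <= x + 2 * PI ->
     is_derive g t (dg t) /\ is_derive dg t (d2g t)) ->
  (forall t, x <= t <= x + 2 * PI -> d2g t + g t / 4 <= 0) ->
  g x + g (x + 2 * PI) <= 0.
Proof.
  intros Hd Hsub.
  pose proof PI_RGT_0.
  assert (Hmono : sturm_wronskian (x + 2 * PI) <= sturm_wronskian x).
  { apply (nonpos_derive_antitone _
             (fun t => (d2g t + g t / 4) * sin ((t - x) / 2))); [lra | |].
    - intros t Ht; destruct (Hd t Ht); now apply is_derive_sturm_wronskian.
    - intros t Ht.
      assert (0 <= sin ((t - x) / 2)) by (apply sin_ge_0; lra).
      pose proof (Hsub t Ht); nra. }
  unfold sturm_wronskian in Hmono.
  replace ((x - x) / 2) with 0 in Hmono by field.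
  replace ((x + 2 * PI - x) / 2) with PI in Hmono by field.
  rewrite sin_0, cos_0, sin_PI, cos_PI in Hmono.
  lra.
Qed.

End Sturm.

Lemma profile_drift_nonneg (n : nat) (r : R) :
  (1 <= n)%nat -> sqrt (2 * (INR n - 1)) <= r -> 0 <= r / 2 - (INR n - 1) / r.
Proof.
  intros hn hr.
  assert (Hn : 1 <= INR n) by (apply (le_INR 1 n) in hn; simpl in hn; lra).
  pose proof (sqrt_pos (2 * (INR n - 1))).
  pose proof (sqrt_sqrt (2 * (INR n - 1))).
  destruct (Req_dec r 0) as [-> | Hr0].
  - unfold Rdiv; rewrite Rinv_0; lra.
  - replace (r / 2 - (INR n - 1) / r) with ((r * r - 2 * (INR n - 1)) / (2 * r))
      by (field; lra).
    apply Rdiv_le_0_compat; nra.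
Qed.

Lemma profile_eq_d2f_le (n : nat) (f df d2f : R -> R) (r : R) :
  (1 <= n)%nat -> sqrt (2 * (INR n - 1)) <= r ->
  profile_eq n f df d2f r -> df r <= 0 -> 0 <= f r ->
  d2f r <= - f r / 2.
Proof.
  intros hn hr Heq Hdf Hf.
  pose proof (profile_drift_nonneg n r hn hr) as Hc.
  unfold profile_eq in Heq.
  set (c := r / 2 - (INR n - 1) / r) in *.
  assert (Hp : 0 < 1 + df r ^ 2) by (simpl; nra).
  assert (Hd2 : d2f r = (c * df r - f r / 2) * (1 + df r ^ 2))
    by (rewrite <- Heq; field; lra).
  assert (c * df r <= 0) by nra.
  assert (0 <= df r ^ 2) by (simpl; nra).
  rewrite Hd2; nra.
Qed.

Theorem lemma2p5 (n : nat) (hn : (2 <= n)%nat) :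
  exists M1 : R, sqrt (2 * (INR n - 1)) < M1 /\
    forall (a : R) (b : Rbar) (f df d2f : R -> R),
      0 <= a -> a < sqrt (2 * (INR n - 1)) ->
      Rbar_lt (Finite (sqrt (2 * (INR n - 1)))) b ->
      is_profile_solution n a b f df d2f ->
      0 < f (sqrt (2 * (INR n - 1))) ->
      (forall r, sqrt (2 * (INR n - 1)) <= r -> Rbar_lt (Finite r) b ->
         df r <= 0) ->
      forall r, M1 < r -> Rbar_lt (Finite r) b -> f r < 0.
Proof.
  set (s := sqrt (2 * (INR n - 1))).
  pose proof PI_RGT_0.
  exists (s + 2 * PI); split; [lra |].
  intros a b f df d2f _ has _ hsol hfs hdf r hr hrb.
  apply Rnot_le_lt; intros Hfr.
  assert (Hb : forall t, t <= r -> Rbar_lt t b)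
    by (intros t Ht; destruct b; simpl in *; lra).
  assert (Hsol : forall t, s <= t <= r ->
            is_derive f t (df t) /\ is_derive df t (d2f t) /\ profile_eq n f df d2f t)
    by (intros t Ht; apply hsol; [lra | apply Hb; lra]).
  assert (Hdf : forall t, s <= t <= r -> df t <= 0)
    by (intros t Ht; apply hdf; [lra | apply Hb; lra]).
  assert (Hfnn : forall t, s <= t <= r -> 0 <= f t).
  { intros t Ht.
    enough (f r <= f t) by lra.
    apply (nonpos_derive_antitone f df); [lra | |].
    - intros u Hu; apply Hsol; lra.
    - intros u Hu; apply Hdf; lra. }
  assert (0 <= f (s + 2 * PI)) by (apply Hfnn; lra).
  enough (f s + f (s + 2 * PI) <= 0) by lra.
  apply (sturm_half_period f df d2f s).
  - intros t Ht; destruct (Hsol t) as [? [? _]]; [lra | split; assumption].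
  - intros t Ht.
    destruct (Hsol t) as [_ [_ Heq]]; [lra |].
    pose proof (Hfnn t ltac:(lra)).
    enough (d2f t <= - f t / 2) by lra.
    apply (profile_eq_d2f_le n f df d2f t); [lia | fold s; lra | exact Heq | |];
      [apply Hdf | apply Hfnn]; lra.
Qed.
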